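(* Let $0\to(M,\alpha_M)\xrightarrow{t}(G,\alpha_G)\xrightarrow{p}(Q,\mathrm{Id}_Q)\to0$ be a split short exact sequence of $\alpha$-perfect Hom-Leibniz algebras with splitting homomorphism $s:(Q,\mathrm{Id}_Q)\to(G,\alpha_G)$, $p\circ s=\mathrm{Id}_Q$. Let $\tau=\mathfrak{uce}_\alpha(t)$, $\pi=\mathfrak{uce}_\alpha(p):\mathfrak{uce}_\alpha(G)\to\mathfrak{uce}(Q)$. Then $\mathrm{Ker}(\pi)$ equals the subspace $\{\alpha_M(M),\alpha_M(M)\}$ of $\mathfrak{uce}_\alpha(G)$ spanned by the classes $\{t(\alpha_M(m_1)),t(\alpha_M(m_2))\}$, $m_1,m_2\in M$, and this subspace equals $\tau(\mathfrak{uce}_\alpha(M))$.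
   Context: Hom-Leibniz algebras are multiplicative: $(L,\alpha_L)$ is a $\mathbb{K}$-vector space with bilinear bracket and linear $\alpha_L$ such that $[\alpha_L(x),[y,z]]=[[x,y],\alpha_L(z)]-[[x,z],\alpha_L(y)]$ and $\alpha_L[x,y]=[\alpha_L(x),\alpha_L(y)]$; homomorphisms preserve brackets and commute with structure maps. $(L,\alpha_L)$ is $\alpha$-perfect if $L=[\alpha_L(L),\alpha_L(L)]$ (so $(Q,\mathrm{Id}_Q)$ is $\alpha$-perfect iff $Q=[Q,Q]$). For $\alpha$-perfect $(L,\alpha_L)$: $I_L\subseteq\alpha_L(L)\otimes\alpha_L(L)$ is spanned by $-[x_1,x_2]\otimes\alpha_L(x_3)+[x_1,x_3]\otimes\alpha_L(x_2)+\alpha_L(x_1)\otimes[x_2,x_3]$; $\mathfrak{uce}_\alpha(L)=(\alpha_L(L)\otimes\alpha_L(L))/I_L$ with classes $\{\alpha_L(x_1),\alpha_L(x_2)\}$, bracket $[\{a,b\},\{c,e\}]=\{[a,b],[c,e]\}$, endomorphism $\overline{\alpha}\{\alpha_L(x_1),\alpha_L(x_2)\}=\{\alpha_L^2(x_1),\alpha_L^2(x_2)\}$. For $\alpha_L=\mathrm{Id}$ this is $\mathfrak{uce}(Q)=(Q\otimes Q)/I_Q$ with identity endomorphism. For a homomorphism $g$ of $\alpha$-perfect algebras, $\mathfrak{uce}_\alpha(g)\{\alpha(x_1),\alpha(x_2)\}=\{\alpha(g(x_1)),\alpha(g(x_2))\}$. *)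

From HB Require Import structures.
From mathcomp Require Import all_boot all_order all_algebra.
Set Implicit Arguments. Unset Strict Implicit. Unset Printing Implicit Defensive.
Import GRing.Theory.
Local Open Scope ring_scope.

Record HLA (K : fieldType) := {
  hla_V :> lmodType K;
  hla_br : hla_V -> hla_V -> hla_V;
  hla_alpha : {linear hla_V -> hla_V};
  hla_brl : forall (k : K) x y z, hla_br (k *: x + y) z = k *: hla_br x z + hla_br y z;
  hla_brr : forall (k : K) x y z, hla_br z (k *: x + y) = k *: hla_br z x + hla_br z y;
  hla_leib : forall x y z,
    hla_br (hla_alpha x) (hla_br y z)
    = hla_br (hla_br x y) (hla_alpha z) - hla_br (hla_br x z) (hla_alpha y);
  hla_mult : forall x y, hla_alpha (hla_br x y) = hla_br (hla_alpha x) (hla_alpha y)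
}.

Section Defs.
Variable K : fieldType.

Definition hla_hom (L H : HLA K) (f : {linear L -> H}) : Prop :=
  (forall x y, f (hla_br x y) = hla_br (f x) (f y)) /\
  (forall x, f (hla_alpha L x) = hla_alpha H (f x)).

Definition alpha_perfect (L : HLA K) : Prop :=
  forall z : L, exists l : seq (K * L * L),
    z = \sum_(e <- l) e.1.1 *: hla_br (hla_alpha L e.1.2) (hla_alpha L e.2).

(* Formal K-linear combinations of pairs (a,b): elements of the free vector
   space on pairs; the term (k,a,b) stands for k . (a (x) b). *)
Definition fsum (L : HLA K) := seq (K * L * L).

Definition fs_coef (L : HLA K) (w : fsum L) (a b : L) : K :=
  \sum_(e <- w | (e.1.2 == a) && (e.2 == b)) e.1.1.

Definition fs_eq (L : HLA K) (w w' : fsum L) : Prop :=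
  forall a b, fs_coef w a b = fs_coef w' a b.

Definition fs_scale (L : HLA K) (c : K) (w : fsum L) : fsum L :=
  [seq (c * e.1.1, e.1.2, e.2) | e <- w].

Definition fs_sub (L : HLA K) (w w' : fsum L) : fsum L := w ++ fs_scale (-1) w'.

(* all entries lie in alpha_L(L), i.e. w represents an element of
   the free space on alpha(L) x alpha(L) *)
Definition fs_on (L : HLA K) (w : fsum L) : Prop :=
  forall e, e \in w ->
    (exists x, e.1.2 = hla_alpha L x) /\ (exists y, e.2 = hla_alpha L y).

Definition fs_map (L H : HLA K) (f : L -> H) (w : fsum L) : fsum H :=
  [seq (e.1.1, f e.1.2, f e.2) | e <- w].

(* Generators of the subspace of the free vector space on alpha(L) x alpha(L)
   that is killed in uce_alpha(L) = (alpha(L) (x) alpha(L)) / I_L :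
   bilinearity relations of the tensor product, and the generators of I_L. *)
Definition rel_gen (L : HLA K) (g : fsum L) : Prop :=
  let al := hla_alpha L in
  let br := @hla_br K L in
  (exists x x' y, g = [:: (1, al x + al x', al y); (-1, al x, al y); (-1, al x', al y)])
  \/ (exists x y y', g = [:: (1, al x, al y + al y'); (-1, al x, al y); (-1, al x, al y')])
  \/ (exists (k : K) x y, g = [:: (1, k *: al x, al y); (- k, al x, al y)])
  \/ (exists (k : K) x y, g = [:: (1, al x, k *: al y); (- k, al x, al y)])
  \/ (exists x1 x2 x3, g = [:: (-1, br x1 x2, al x3); (1, br x1 x3, al x2);
                               (1, al x1, br x2 x3)]).

Definition uce_zero (L : HLA K) (w : fsum L) : Prop :=
  exists gs : seq (K * fsum L),
    (forall c g, (c, g) \in gs -> rel_gen g) /\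
    fs_eq w (flatten [seq fs_scale cg.1 cg.2 | cg <- gs]).

End Defs.

From mathcomp Require Import all_boot all_order all_algebra ring.
Set Implicit Arguments. Unset Strict Implicit. Unset Printing Implicit Defensive.
Import GRing.Theory.
Local Open Scope ring_scope.

(* A formal sum w of pairs is determined by its evaluations
   fs_eval f w = sum k * f a b against all test functions f : L -> L -> K
   (lemma fs_eqP), so "w represents 0 in uce_alpha(L)" becomes: the functional
   f |-> fs_eval f w is a linear combination of evaluations of relation
   generators (rel_span, lemma uce_zeroP).  Homomorphisms push such relations
   forward, and for alpha-perfect L every bilinearity relation of the tensor
   product is available, not only those on alpha(L).

   For the split extension, write g = s(p g) + t(alpha m).  Since
   alpha_G(s q) = s q and ker p = t(alpha(M)), the Leibniz relations show
   that {s q, t m} and {t m, s q} lie, modulo relations, in the span of the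
   classes {t(alpha m1), t(alpha m2)}; by bilinearity so does
   {a, b} - {s p a, s p b}.  Hence w is congruent to s_*(p_* w) modulo that
   span, which yields Ker(pi) = span, and the span is the image of tau because
   its generators are the images of the generators of uce_alpha(M). *)

Section BasicFacts.
Variables (K : fieldType) (L : HLA K).

Lemma br0r (z : L) : hla_br z 0 = 0.
Proof.
have := hla_brr 1 0 0 z; rewrite !scale1r addr0 => E.
by apply: (@addrI _ (hla_br z 0)); rewrite addr0 -E.
Qed.

Lemma br0l (z : L) : hla_br 0 z = 0.
Proof.
have := hla_brl 1 0 0 z; rewrite !scale1r addr0 => E.
by apply: (@addrI _ (hla_br 0 z)); rewrite addr0 -E.
Qed.

Lemma alpha_surj : alpha_perfect L -> forall g : L, exists x, g = hla_alpha L x.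
Proof.
move=> PL g; have [l ->] := PL g.
exists (\sum_(e <- l) e.1.1 *: hla_br e.1.2 e.2).
by rewrite linear_sum; apply: eq_bigr => e _; rewrite linearZ hla_mult.
Qed.

End BasicFacts.

Section FormalSums.
Variables (K : fieldType) (L : HLA K).

Definition fs_eval (f : L -> L -> K) (w : fsum L) : K :=
  \sum_(e <- w) e.1.1 * f e.1.2 e.2.

Lemma fs_eval_cat f (w w' : fsum L) : fs_eval f (w ++ w') = fs_eval f w + fs_eval f w'.
Proof. by rewrite /fs_eval big_cat. Qed.

Lemma fs_eval_scale f c (w : fsum L) : fs_eval f (fs_scale c w) = c * fs_eval f w.
Proof.
rewrite /fs_eval /fs_scale big_map mulr_sumr.
by apply: eq_bigr => e _; rewrite mulrA.
Qed.

Lemma fs_eval_sub f (w w' : fsum L) : fs_eval f (fs_sub w w') = fs_eval f w - fs_eval f w'.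
Proof. by rewrite /fs_sub fs_eval_cat fs_eval_scale mulN1r. Qed.

Lemma fs_eval_flatten f (gs : seq (K * fsum L)) :
  fs_eval f (flatten [seq fs_scale cg.1 cg.2 | cg <- gs])
  = \sum_(cg <- gs) cg.1 * fs_eval f cg.2.
Proof.
elim: gs => [|cg gs IH]; first by rewrite big_nil /fs_eval big_nil.
by rewrite /= fs_eval_cat IH fs_eval_scale big_cons.
Qed.

Lemma fs_eval_coef (S : seq (L * L)) (w : fsum L) f :
  uniq S -> {subset [seq (e.1.2, e.2) | e <- w] <= S} ->
  fs_eval f w = \sum_(pr <- S) fs_coef w pr.1 pr.2 * f pr.1 pr.2.
Proof.
move=> uS; elim: w => [|e w IH] supp.
  by rewrite /fs_eval big_nil; apply/esym/big1 => pr _; rewrite /fs_coef big_nil mul0r.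
have eS : (e.1.2, e.2) \in S by apply: supp; rewrite inE eqxx.
rewrite /fs_eval big_cons -/(fs_eval f w) IH; last first.
  by move=> x xw; apply: supp; rewrite inE xw orbT.
rewrite [in RHS](eq_bigr (fun pr =>
    (if (e.1.2 == pr.1) && (e.2 == pr.2) then e.1.1 else 0) * f pr.1 pr.2
    + fs_coef w pr.1 pr.2 * f pr.1 pr.2)); last first.
  move=> pr _; rewrite /fs_coef big_cons -/(fs_coef w _ _).
  by case: (_ && _); rewrite ?mulrDl ?mul0r ?add0r.
rewrite big_split /=; congr (_ + _).
rewrite (bigD1_seq (e.1.2, e.2)) //= !eqxx /= big1 ?addr0 // => -[a b].
rewrite xpair_eqE /= negb_and (eq_sym e.1.2) (eq_sym e.2).
by case: (a == _); case: (b == _) => //= _; rewrite mul0r.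
Qed.

(* Two formal sums are equal iff they have the same evaluations: indicator
   functions recover coefficients, and coefficients determine evaluations. *)
Lemma fs_eqP (w w' : fsum L) : fs_eq w w' <-> forall f, fs_eval f w = fs_eval f w'.
Proof.
split=> [Ecoef f|Eeval a b].
  pose S := undup ([seq (e.1.2, e.2) | e <- w] ++ [seq (e.1.2, e.2) | e <- w']).
  have uS : uniq S by apply: undup_uniq.
  rewrite (@fs_eval_coef S) //; last by move=> x xw; rewrite mem_undup mem_cat xw.
  rewrite (@fs_eval_coef S w') //; last by move=> x xw; rewrite mem_undup mem_cat xw orbT.
  by apply: eq_bigr => pr _; rewrite Ecoef.
have coefE v : fs_coef v a b = fs_eval (fun x y => ((x == a) && (y == b))%:R) v.
  rewrite /fs_coef /fs_eval big_mkcond; apply: eq_bigr => e _.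
  by case: (_ && _); rewrite ?mulr1 ?mulr0.
by rewrite !coefE Eeval.
Qed.

(* A functional on test functions lies in the span of the evaluations of the
   relation generators; for Phi = fs_eval^~ w this says [w] = 0. *)
Definition rel_span (Phi : (L -> L -> K) -> K) : Prop :=
  exists gs : seq (K * fsum L), (forall c g, (c, g) \in gs -> rel_gen g) /\
    forall f, Phi f = \sum_(cg <- gs) cg.1 * fs_eval f cg.2.

Lemma uce_zeroP (w : fsum L) : uce_zero w <-> rel_span (fs_eval^~ w).
Proof.
split=> -[gs [gen Ew]]; exists gs; split=> //.
  by move=> f; rewrite -fs_eval_flatten; move/fs_eqP: Ew.
by apply/fs_eqP => f; rewrite fs_eval_flatten.
Qed.

Lemma rel_span_ext (Phi Psi : (L -> L -> K) -> K) :
  (forall f, Phi f = Psi f) -> rel_span Phi -> rel_span Psi.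
Proof. by move=> E [gs [gen EPhi]]; exists gs; split=> // f; rewrite -E. Qed.

Lemma rel_span0 : rel_span (fun _ => 0).
Proof. by exists [::]; split=> // f; rewrite big_nil. Qed.

Lemma rel_spanD (Phi Psi : (L -> L -> K) -> K) :
  rel_span Phi -> rel_span Psi -> rel_span (fun f => Phi f + Psi f).
Proof.
move=> [gs [gen E]] [gs' [gen' E']]; exists (gs ++ gs'); split.
  by move=> c g; rewrite mem_cat => /orP[/gen|/gen'].
by move=> f; rewrite big_cat E E'.
Qed.

Lemma rel_spanZ (c : K) (Phi : (L -> L -> K) -> K) :
  rel_span Phi -> rel_span (fun f => c * Phi f).
Proof.
move=> [gs [gen E]]; exists [seq (c * cg.1, cg.2) | cg <- gs]; split.
  by move=> c' g /mapP[[c0 g0] /gen ? [_ ->]].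
by move=> f; rewrite E big_map mulr_sumr; apply: eq_bigr => cg _; rewrite mulrA.
Qed.

Lemma rel_span_gen (g : fsum L) : rel_gen g -> rel_span (fs_eval^~ g).
Proof.
move=> gen; exists [:: (1, g)]; split; first by move=> c g'; rewrite inE => /eqP[_ ->].
by move=> f; rewrite big_cons big_nil addr0 mul1r.
Qed.

Lemma rel_span_leibniz (x1 x2 x3 : L) :
  rel_span (fun f => - f (hla_br x1 x2) (hla_alpha L x3)
                     + f (hla_br x1 x3) (hla_alpha L x2)
                     + f (hla_alpha L x1) (hla_br x2 x3)).
Proof.
apply: rel_span_ext (rel_span_gen _); last by do 4 right; exists x1, x2, x3.
by move=> f; rewrite /fs_eval !big_cons big_nil /=; ring.
Qed.

Section Perfect.
Hypothesis PL : alpha_perfect L.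

(* For alpha-perfect L every element lies in alpha(L), so the bilinearity
   relations hold for all arguments. *)
Lemma rel_span_addl (u u' v : L) : rel_span (fun f => f (u + u') v - f u v - f u' v).
Proof.
have [[x ->] [x' ->]] := (alpha_surj PL u, alpha_surj PL u'); have [y ->] := alpha_surj PL v.
apply: rel_span_ext (rel_span_gen _); last by left; exists x, x', y.
by move=> f; rewrite /fs_eval !big_cons big_nil /=; ring.
Qed.

Lemma rel_span_addr (u v v' : L) : rel_span (fun f => f u (v + v') - f u v - f u v').
Proof.
have [[x ->] [y ->]] := (alpha_surj PL u, alpha_surj PL v); have [y' ->] := alpha_surj PL v'.
apply: rel_span_ext (rel_span_gen _); last by right; left; exists x, y, y'.
by move=> f; rewrite /fs_eval !big_cons big_nil /=; ring.
Qed.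

Lemma rel_span_scalel (k : K) (u v : L) : rel_span (fun f => f (k *: u) v - k * f u v).
Proof.
have [[x ->] [y ->]] := (alpha_surj PL u, alpha_surj PL v).
apply: rel_span_ext (rel_span_gen _); last by do 2 right; left; exists k, x, y.
by move=> f; rewrite /fs_eval !big_cons big_nil /=; ring.
Qed.

Lemma rel_span_scaler (k : K) (u v : L) : rel_span (fun f => f u (k *: v) - k * f u v).
Proof.
have [[x ->] [y ->]] := (alpha_surj PL u, alpha_surj PL v).
apply: rel_span_ext (rel_span_gen _); last by do 3 right; left; exists k, x, y.
by move=> f; rewrite /fs_eval !big_cons big_nil /=; ring.
Qed.

Lemma rel_span_zerol (u : L) : rel_span (fun f => f 0 u).
Proof. by apply: rel_span_ext (rel_span_scalel 0 0 u) => f; rewrite scale0r mul0r subr0. Qed.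

Lemma rel_span_zeror (u : L) : rel_span (fun f => f u 0).
Proof. by apply: rel_span_ext (rel_span_scaler 0 u 0) => f; rewrite scale0r mul0r subr0. Qed.

End Perfect.
End FormalSums.

Section Pushforward.
Variables (K : fieldType) (L H : HLA K) (h : {linear L -> H}).
Hypothesis hom_h : hla_hom h.

Lemma fs_eval_map f (w : fsum L) :
  fs_eval f (fs_map h w) = fs_eval (fun a b => f (h a) (h b)) w.
Proof. by rewrite /fs_eval /fs_map big_map. Qed.

Lemma rel_gen_map (g : fsum L) : rel_gen g -> rel_gen (fs_map h g).
Proof.
have [hbr halpha] := hom_h; rewrite /rel_gen /=.
case=> [[x [x' [y ->]]]|[[x [y [y' ->]]]|[[k [x [y ->]]]|[[k [x [y ->]]]|[x1 [x2 [x3 ->]]]]]]].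
- by left; exists (h x), (h x'), (h y); rewrite /fs_map /= linearD !halpha.
- by right; left; exists (h x), (h y), (h y'); rewrite /fs_map /= linearD !halpha.
- by do 2 right; left; exists k, (h x), (h y); rewrite /fs_map /= linearZ !halpha.
- by do 3 right; left; exists k, (h x), (h y); rewrite /fs_map /= linearZ !halpha.
- by do 4 right; exists (h x1), (h x2), (h x3); rewrite /fs_map /= !hbr !halpha.
Qed.

Lemma rel_span_map (Phi : (L -> L -> K) -> K) :
  rel_span Phi -> rel_span (fun f : H -> H -> K => Phi (fun a b => f (h a) (h b))).
Proof.
move=> [gs [gen E]]; exists [seq (cg.1, fs_map h cg.2) | cg <- gs]; split.
  by move=> c' g /mapP[[c0 g0] /gen ? [_ ->]]; apply: rel_gen_map.
by move=> f; rewrite E big_map; apply: eq_bigr => cg _; rewrite fs_eval_map.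
Qed.

End Pushforward.

Section ImageSpan.
Variables (K : fieldType) (M G : HLA K) (t : {linear M -> G}).

Definition image_gens (ms : seq (K * M * M)) : fsum G :=
  [seq (e.1.1, t (hla_alpha M e.1.2), t (hla_alpha M e.2)) | e <- ms].

(* Phi is congruent, modulo the relations of uce_alpha(G), to an element of
   the span of the classes {t(alpha m1), t(alpha m2)}. *)
Definition in_image_span (Phi : (G -> G -> K) -> K) : Prop :=
  exists ms, rel_span (fun f => Phi f - fs_eval f (image_gens ms)).

(* The span of these classes is the image of uce_alpha(M) under tau. *)
Lemma image_gensP (w : fsum G) :
  (exists ms, w = image_gens ms) <-> exists v : fsum M, fs_on v /\ w = fs_map t v.
Proof.
split=> [[ms ->]|[v [von ->]]].
  exists [seq (e.1.1, hla_alpha M e.1.2, hla_alpha M e.2) | e <- ms]; split.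
    by move=> e /mapP[e' _ ->] /=; split; [exists e'.1.2 | exists e'.2].
  by rewrite /fs_map -map_comp.
elim: v von => [|e v IH] von; first by exists [::].
have [[x Ex] [y Ey]] := von e (mem_head _ _).
have [ms Ems] : exists ms, fs_map t v = image_gens ms.
  by apply: IH => e' ve'; apply: von; rewrite inE ve' orbT.
by exists ((e.1.1, x, y) :: ms); rewrite /fs_map /= in Ems *; rewrite Ex Ey -Ems.
Qed.

Lemma in_image_span_ext (Phi Psi : (G -> G -> K) -> K) :
  (forall f, Phi f = Psi f) -> in_image_span Phi -> in_image_span Psi.
Proof. by move=> E [ms S]; exists ms; apply: rel_span_ext S => f; rewrite E. Qed.

Lemma in_image_span_rel (Phi : (G -> G -> K) -> K) : rel_span Phi -> in_image_span Phi.
Proof.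
by move=> S; exists [::]; apply: rel_span_ext S => f; rewrite /fs_eval big_nil subr0.
Qed.

Lemma in_image_spanD (Phi Psi : (G -> G -> K) -> K) :
  in_image_span Phi -> in_image_span Psi -> in_image_span (fun f => Phi f + Psi f).
Proof.
move=> [ms S] [ms' S']; exists (ms ++ ms'); apply: rel_span_ext (rel_spanD S S') => f.
by rewrite /image_gens map_cat fs_eval_cat; ring.
Qed.

Lemma in_image_spanZ (c : K) (Phi : (G -> G -> K) -> K) :
  in_image_span Phi -> in_image_span (fun f => c * Phi f).
Proof.
move=> [ms S]; exists [seq (c * e.1.1, e.1.2, e.2) | e <- ms].
apply: rel_span_ext (rel_spanZ c S) => f.
by rewrite mulrBr -fs_eval_scale /fs_scale /image_gens -!map_comp.
Qed.

Lemma in_image_span_gen (n1 n2 : M) :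
  in_image_span (fun f => f (t (hla_alpha M n1)) (t (hla_alpha M n2))).
Proof.
exists [:: (1, n1, n2)]; apply: rel_span_ext (rel_span0 G) => f.
by rewrite /fs_eval big_cons big_nil /=; ring.
Qed.

Section Linearity.
Hypothesis PG : alpha_perfect G.

Lemma in_image_span_sumr (X : Type) (u : G) (c : X -> K) (v : X -> G) :
  (forall x, in_image_span (fun f => f u (v x))) ->
  forall l : seq X, in_image_span (fun f => f u (\sum_(x <- l) c x *: v x)).
Proof.
move=> Sv; elim=> [|x l IH].
  by apply: in_image_span_rel; apply: rel_span_ext (rel_span_zeror PG u) => f; rewrite big_nil.
set rest := \sum_(y <- l) c y *: v y.
apply: in_image_span_ext (in_image_spanD (in_image_spanD
    (in_image_span_rel (rel_span_addr PG u (c x *: v x) rest))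
    (in_image_span_rel (rel_span_scaler PG (c x) u (v x))))
  (in_image_spanD (in_image_spanZ (c x) (Sv x)) IH)) => f.
by rewrite big_cons -/rest; ring.
Qed.

Lemma in_image_span_suml (X : Type) (u : G) (c : X -> K) (v : X -> G) :
  (forall x, in_image_span (fun f => f (v x) u)) ->
  forall l : seq X, in_image_span (fun f => f (\sum_(x <- l) c x *: v x) u).
Proof.
move=> Sv; elim=> [|x l IH].
  by apply: in_image_span_rel; apply: rel_span_ext (rel_span_zerol PG u) => f; rewrite big_nil.
set rest := \sum_(y <- l) c y *: v y.
apply: in_image_span_ext (in_image_spanD (in_image_spanD
    (in_image_span_rel (rel_span_addl PG (c x *: v x) rest u))
    (in_image_span_rel (rel_span_scalel PG (c x) (v x) u)))
  (in_image_spanD (in_image_spanZ (c x) (Sv x)) IH)) => f.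
by rewrite big_cons -/rest; ring.
Qed.

End Linearity.
End ImageSpan.

Section SplitExtension.
Variables (K : fieldType) (M G Q : HLA K).
Variables (t : {linear M -> G}) (p : {linear G -> Q}) (s : {linear Q -> G}).
Hypotheses (PM : alpha_perfect M) (PG : alpha_perfect G) (PQ : alpha_perfect Q).
Hypothesis alphaQ_id : forall x : Q, hla_alpha Q x = x.
Hypotheses (hom_t : hla_hom t) (hom_p : hla_hom p) (hom_s : hla_hom s).
Hypothesis ker_p : forall g : G, p g = 0 <-> exists m : M, g = t m.
Hypothesis section_s : forall q : Q, p (s q) = q.

Lemma p_t (m : M) : p (t m) = 0.
Proof. by apply/ker_p; exists m. Qed.

Lemma ker_p_alpha (g : G) : p g = 0 -> exists n, g = t (hla_alpha M n).
Proof. by move/ker_p=> [m ->]; have [n ->] := alpha_surj PM m; exists n. Qed.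

Lemma split_decomposition (g : G) : exists n, g = s (p g) + t (hla_alpha M n).
Proof.
have [n En] : exists n, g - s (p g) = t (hla_alpha M n).
  by apply: ker_p_alpha; rewrite linearB section_s subrr.
by exists n; rewrite -En addrC subrK.
Qed.

Lemma alpha_section (q : Q) : hla_alpha G (s q) = s q.
Proof. by rewrite -(proj2 hom_s) alphaQ_id. Qed.

Lemma alpha_image (m : M) : hla_alpha G (t m) = t (hla_alpha M m).
Proof. by rewrite (proj2 hom_t). Qed.

Lemma mixed_brackets_ker (q : Q) (m : M) :
  (exists n, hla_br (s q) (t m) = t (hla_alpha M n)) /\
  (exists n, hla_br (t m) (s q) = t (hla_alpha M n)).
Proof. by split; apply: ker_p_alpha; rewrite (proj1 hom_p) p_t ?br0r ?br0l. Qed.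

Lemma image_as_brackets (m : M) : exists l : seq (K * M * M),
  t m = \sum_(e <- l) e.1.1 *: hla_br (t (hla_alpha M e.1.2)) (t (hla_alpha M e.2)).
Proof.
have [l ->] := PM m; exists l; rewrite linear_sum.
by apply: eq_bigr => e _; rewrite linearZ (proj1 hom_t).
Qed.

(* The Leibniz relation with x1 = s q rewrites {s q, [t(alpha a), t(alpha b)]}
   as a combination of classes of pairs in t(alpha(M)). *)
Lemma section_bracket_right (q : Q) (a b : M) :
  in_image_span t (fun f => f (s q) (hla_br (t (hla_alpha M a)) (t (hla_alpha M b)))).
Proof.
have [[na Ea] _] := mixed_brackets_ker q (hla_alpha M a).
have [[nb Eb] _] := mixed_brackets_ker q (hla_alpha M b).
apply: in_image_span_ext (in_image_spanD
    (in_image_span_rel t (rel_span_leibniz (s q) (t (hla_alpha M a)) (t (hla_alpha M b))))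
    (in_image_spanD (in_image_span_gen t na (hla_alpha M b))
       (in_image_spanZ (-1) (in_image_span_gen t nb (hla_alpha M a))))) => f.
by rewrite Ea Eb !alpha_image alpha_section; ring.
Qed.

Lemma section_bracket_left (q : Q) (a b : M) :
  in_image_span t (fun f => f (hla_br (t (hla_alpha M a)) (t (hla_alpha M b))) (s q)).
Proof.
have [_ [na Ea]] := mixed_brackets_ker q (hla_alpha M a).
have [_ [nb Eb]] := mixed_brackets_ker q (hla_alpha M b).
apply: in_image_span_ext (in_image_spanD
    (in_image_spanZ (-1)
       (in_image_span_rel t (rel_span_leibniz (t (hla_alpha M a)) (t (hla_alpha M b)) (s q))))
    (in_image_spanD (in_image_span_gen t na (hla_alpha M b))
       (in_image_span_gen t (hla_alpha M a) nb))) => f.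
by rewrite Ea Eb !alpha_image alpha_section; ring.
Qed.

Lemma mixed_pairs_in_span (q : Q) (m : M) :
  in_image_span t (fun f => f (s q) (t m)) /\ in_image_span t (fun f => f (t m) (s q)).
Proof.
have [l ->] := image_as_brackets m; split.
- exact: (in_image_span_sumr PG (fun e : K * M * M => e.1.1)
           (fun e => section_bracket_right q e.1.2 e.2) l).
- exact: (in_image_span_suml PG (fun e : K * M * M => e.1.1)
           (fun e => section_bracket_left q e.1.2 e.2) l).
Qed.

(* Expanding bilinearly, perturbing both entries of {s q1, s q2} by elements
   of t(alpha(M)) only adds elements of the span. *)
Lemma shifted_pair_in_span (q1 q2 : Q) (n1 n2 : M) :
  in_image_span t (fun f => f (s q1 + t (hla_alpha M n1)) (s q2 + t (hla_alpha M n2))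
                            - f (s q1) (s q2)).
Proof.
have [S12 _] := mixed_pairs_in_span q1 (hla_alpha M n2).
have [_ S21] := mixed_pairs_in_span q2 (hla_alpha M n1).
apply: in_image_span_ext (in_image_spanD (in_image_spanD
    (in_image_span_rel t
       (rel_span_addl PG (s q1) (t (hla_alpha M n1)) (s q2 + t (hla_alpha M n2))))
    (in_image_span_rel t (rel_span_addr PG (s q1) (s q2) (t (hla_alpha M n2)))))
  (in_image_spanD (in_image_spanD S12 S21)
    (in_image_spanD
       (in_image_span_rel t (rel_span_addr PG (t (hla_alpha M n1)) (s q2) (t (hla_alpha M n2))))
       (in_image_span_gen t n1 n2)))) => f.
ring.
Qed.

Lemma pair_section_difference (a b : G) :
  in_image_span t (fun f => f a b - f (s (p a)) (s (p b))).
Proof.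
have [n1 Ea] := split_decomposition a; have [n2 Eb] := split_decomposition b.
by have := shifted_pair_in_span (p a) (p b) n1 n2; rewrite -Ea -Eb.
Qed.

Lemma fs_section_difference (w : fsum G) :
  in_image_span t (fun f => fs_eval f w - fs_eval (fun a b => f (s (p a)) (s (p b))) w).
Proof.
elim: w => [|e w IH].
  apply: in_image_span_rel; apply: rel_span_ext (rel_span0 G) => f.
  by rewrite /fs_eval !big_nil subr0.
apply: in_image_span_ext (in_image_spanD
  (in_image_spanZ e.1.1 (pair_section_difference e.1.2 e.2)) IH) => f.
by rewrite /fs_eval !big_cons; ring.
Qed.

(* pi kills the span: p o t = 0 and {0, 0} = 0 in uce(Q). *)
Lemma image_gens_killed (ms : seq (K * M * M)) :
  rel_span (fun f => fs_eval f (fs_map p (image_gens t ms))).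
Proof.
apply: rel_span_ext (rel_spanZ (\sum_(e <- ms) e.1.1) (rel_span_zeror PQ 0)) => f.
rewrite fs_eval_map /fs_eval /image_gens big_map mulr_suml.
by apply: eq_bigr => e _; rewrite !p_t.
Qed.

End SplitExtension.

Theorem proposition5p1 (K : fieldType) (M G Q : HLA K)
    (t : {linear M -> G}) (p : {linear G -> Q}) (s : {linear Q -> G}) :
  alpha_perfect M -> alpha_perfect G -> alpha_perfect Q ->
  (forall x : Q, hla_alpha Q x = x) ->
  hla_hom t -> hla_hom p -> hla_hom s ->
  injective t ->
  (forall q : Q, exists g : G, p g = q) ->
  (forall g : G, p g = 0 <-> exists m : M, g = t m) ->
  (forall q : Q, p (s q) = q) ->
  forall w : fsum G, fs_on w ->
    (* [w] in Ker(pi), pi = uce_alpha(p) *)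
    (uce_zero (fs_map p w) <->
     (* [w] in the span of the classes {t(alpha_M m1), t(alpha_M m2)} *)
     exists ms : seq (K * M * M),
       uce_zero (fs_sub w [seq (e.1.1, t (hla_alpha M e.1.2), t (hla_alpha M e.2)) | e <- ms]))
    /\
    ((exists ms : seq (K * M * M),
       uce_zero (fs_sub w [seq (e.1.1, t (hla_alpha M e.1.2), t (hla_alpha M e.2)) | e <- ms]))
     <->
     (* [w] in tau(uce_alpha(M)) *)
     exists v : fsum M, fs_on v /\ uce_zero (fs_sub w (fs_map t v))).
Proof.
move=> PM PG PQ alphaQ hom_t hom_p hom_s _ _ ker_p section_s w _.
split; split.
- (* [p_* w] = 0 gives [s_* p_* w] = 0, and w - s_* p_* w lies in the span. *)
  move=> /uce_zeroP /(rel_span_map hom_s) Zs.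
  have [ms Sms] := fs_section_difference PM PG alphaQ hom_t hom_p hom_s ker_p section_s w.
  exists ms; apply/uce_zeroP; apply: rel_span_ext (rel_spanD Sms Zs) => f /=.
  by rewrite fs_eval_sub fs_eval_map; ring.
-
  move=> [ms /uce_zeroP /(rel_span_map hom_p) Zp]; apply/uce_zeroP.
  apply: rel_span_ext (rel_spanD Zp (image_gens_killed PQ ker_p ms)) => f /=.
  by rewrite fs_eval_sub !fs_eval_map; ring.
- move=> [ms Z]; have [v [von Ev]] := (image_gensP t (image_gens t ms)).1 (ex_intro _ ms erefl).
  by exists v; split; rewrite // -Ev.
- move=> [v [von Z]]; have [ms Ems] := (image_gensP t (fs_map t v)).2 (ex_intro _ v (conj von erefl)).
  by exists ms; move: Z; rewrite Ems.
Qed.
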